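(* Let $G$ be the $m\times n$ grid with $m,n\ge 2$ and a cost function $c:V\to\mathbb{Q}_{\ge 0}$. (i) For every zigzag sequence $q_1,\dots,q_{2k}$ and every sequence $t_1,\dots,t_{2k}$ corresponding to it, the set $\{t_1,\dots,t_{2k}\}$ is a landmark set of $G$. (ii) Let $L$ be a landmark set of $G$ with $|L|\ge 4$ that is both minimal (with respect to inclusion) and of minimum cost. Then, after possibly renumbering the rows and columns of the grid by one of its eight symmetries (with the costs carried along), the vertices of $L$ can be ordered as $t_1,\dots,t_{2k}$ forming a perfect sequence for some zigzag sequence.
   Context: The $m\times n$ grid $G$ has vertex set $V=\{(i,j):1\le i\le m,\ 1\le j\le n\}$, with $(i_1,j_1),(i_2,j_2)$ adjacent iff $|i_1-i_2|+|j_1-j_2|=1$; thus $d((i_1,j_1),(i_2,j_2))=|i_1-i_2|+|j_1-j_2|$. The first coordinate is the row (row $1$ on top, row $m$ at the bottom) and the second is the column. A vertex $x$ separates $u,v$ if $d(x,u)\neq d(x,v)$. A landmark set is $L\subseteq V$ such that every pair of distinct vertices is separated by some vertex of $L$; it is minimal if no proper subset is a landmark set, and of minimum cost if $c(L)=\sum_{a\in L}c(a)$ is smallest among all landmark sets. The eight symmetries of the grid correspond to choosing which corner is numbered $(1,1)$ and which of its two neighbours is numbered $(1,2)$ (this may exchange the roles of $m$ and $n$). A zigzag sequence is a sequence $q_1,\dots,q_{2k}$ of vertices, $k\ge 2$, $q_i=(s_i,d_i)$, with $s_1=1$, $s_{2k}=m$; for even $i$: $d_i=d_{i-1}$ and $s_i>s_{i-1}$;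 for odd $i\ge 3$: $s_i=s_{i-1}$ and $d_i>d_{i-1}$. A sequence $t_1,\dots,t_{2k}$, $t_i=(b_i,c_i)$, corresponds to this zigzag sequence if $t_1=q_1$; for even $i$: $b_i=s_i$ and $c_i\le d_i$; for odd $i\ge 3$: $c_i=d_i$ and $b_i\le s_i$; and moreover $c_{2k}>c_1$. A corresponding sequence is perfect if its total cost $\sum_i c(t_i)$ is minimum among all sequences corresponding to the same zigzag sequence. *)

From HB Require Import structures.
From mathcomp Require Import all_boot all_order all_algebra.
Set Implicit Arguments. Unset Strict Implicit. Unset Printing Implicit Defensive.
Import Order.TTheory GRing.Theory Num.Theory.

(* Vertices of the m x n grid: pairs (row, column), 1-based. *)
Definition vertex := (nat * nat)%type.

Definition inV (m n : nat) (v : vertex) : bool :=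
  (1 <= v.1 <= m) && (1 <= v.2 <= n).

Definition adiff (a b : nat) : nat := (a - b) + (b - a).

Definition gdist (u v : vertex) : nat := adiff u.1 v.1 + adiff u.2 v.2.

Definition separates (x u v : vertex) : bool := gdist x u != gdist x v.

(* A landmark set (finite set represented by a sequence; duplicates irrelevant). *)
Definition landmark (m n : nat) (L : seq vertex) : Prop :=
  all (inV m n) L /\
  forall u v, inV m n u -> inV m n v -> u <> v ->
    exists2 x, x \in L & separates x u v.

Definition minimal_landmark (m n : nat) (L : seq vertex) : Prop :=
  landmark m n L /\
  forall L' : seq vertex, {subset L' <= L} -> ~ {subset L <= L'} ->
    ~ landmark m n L'.

Definition setcost (c : vertex -> rat) (L : seq vertex) : rat :=
  (\sum_(a <- undup L) c a)%R.

Definition min_cost_landmark (m n : nat) (c : vertex -> rat) (L : seq vertex) : Prop :=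
  landmark m n L /\
  forall L', landmark m n L' -> (setcost c L <= setcost c L')%R.

(* Sequences are functions on indices 1..2k. *)
Definition zigzag (m n k : nat) (q : nat -> vertex) : Prop :=
  [/\ 2 <= k,
      (forall i, 1 <= i <= 2 * k -> inV m n (q i)),
      (q 1).1 = 1 /\ (q (2 * k)).1 = m,
      (forall i, 1 <= i <= 2 * k -> ~~ odd i ->
         (q i).2 = (q i.-1).2 /\ (q i.-1).1 < (q i).1) &
      (forall i, 3 <= i <= 2 * k -> odd i ->
         (q i).1 = (q i.-1).1 /\ (q i.-1).2 < (q i).2)].

Definition corresponds (m n k : nat) (q t : nat -> vertex) : Prop :=
  [/\ (forall i, 1 <= i <= 2 * k -> inV m n (t i)),
      t 1 = q 1,
      (forall i, 1 <= i <= 2 * k -> ~~ odd i ->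
         (t i).1 = (q i).1 /\ (t i).2 <= (q i).2),
      (forall i, 3 <= i <= 2 * k -> odd i ->
         (t i).2 = (q i).2 /\ (t i).1 <= (q i).1) &
      (t 1).2 < (t (2 * k)).2].

Definition seqcost (c : vertex -> rat) (k : nat) (t : nat -> vertex) : rat :=
  (\sum_(1 <= i < (2 * k).+1) c (t i))%R.

Definition perfect (m n : nat) (c : vertex -> rat) (k : nat) (q t : nat -> vertex) : Prop :=
  corresponds m n k q t /\
  forall t', corresponds m n k q t' -> (seqcost c k t <= seqcost c k t')%R.

Definition tseq (k : nat) (t : nat -> vertex) : seq vertex :=
  [seq t i | i <- iota 1 (2 * k)].

(* The eight symmetries of the grid: s = (flip rows, flip columns, transpose).
   symv m n s maps the m x n grid onto the (symdims m n s) grid. *)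
Definition symdims (m n : nat) (s : bool * bool * bool) : nat * nat :=
  if s.2 then (n, m) else (m, n).

Definition symv (m n : nat) (s : bool * bool * bool) (v : vertex) : vertex :=
  let i := if s.1.1 then m.+1 - v.1 else v.1 in
  let j := if s.1.2 then n.+1 - v.2 else v.2 in
  if s.2 then (j, i) else (i, j).

Definition syminv (m n : nat) (s : bool * bool * bool) (w : vertex) : vertex :=
  let ij := if s.2 then (w.2, w.1) else w in
  ((if s.1.1 then m.+1 - ij.1 else ij.1), (if s.1.2 then n.+1 - ij.2 else ij.2)).

From HB Require Import structures.
From mathcomp Require Import all_boot all_order all_algebra.
From mathcomp Require Import zify.
Import Order.TTheory GRing.Theory Num.Theory.
Set Implicit Arguments. Unset Strict Implicit. Unset Printing Implicit Defensive.

(* A vertex x separates the diagonal pair (i, j), (i+1, j+1) of a square of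
   the grid iff it lies weakly above-left of (i, j) or strictly below-right of
   it, and similarly for the anti-diagonal pair.  A set L of vertices is a
   landmark set as soon as it splits both pairs of every unit square and is
   contained neither in one inner row nor in one inner column: when u and v
   share neither a row nor a column, their bisector runs through a corner of
   a unit square whose two splitting quadrants lie strictly on either side of
   it, and otherwise a vertex off their bisecting row or column separates
   them.  A
   corresponding sequence climbs from row 1 to row m as a staircase, and so
   meets all these quadrants, which gives (i).

   For (ii), splitting the four corner squares shows that a landmark set
   meets rows 1 and m, or columns 1 and n.  Up to a symmetry, a minimal L with
   at least four vertices then has a vertex x in row 1 left of all its
   vertices in row m: otherwise three of its vertices are already a landmark
   set.  Starting from the rightmost such x, alternately passing to the
   lowest vertex of L in the columns reached so far and to the rightmost one
   in the rows reached so far produces a sequence corresponding to a zigzag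
   sequence; it is a landmark subset of L, hence all of L by minimality.
   Perfection follows from minimum cost, since by (i) every corresponding
   sequence is a landmark set. *)

Lemma mem_inV m n (L : seq vertex) (x : vertex) :
  all (inV m n) L -> x \in L -> 1 <= x.1 <= m /\ 1 <= x.2 <= n.
Proof. by move/allP=> hL /hL /andP. Qed.

(* The two quadrants are exactly the vertices separating (i, j) from
   (i+1, j+1), resp. (i, j+1) from (i+1, j). *)
Definition diag_split (L : seq vertex) i j :=
  has (fun x : vertex => (x.1 <= i) && (x.2 <= j) || (i < x.1) && (j < x.2)) L.
Definition antidiag_split (L : seq vertex) i j :=
  has (fun x : vertex => (x.1 <= i) && (j < x.2) || (i < x.1) && (x.2 <= j)) L.

Definition splits_squares m n L :=
  forall i j, 0 < i < m -> 0 < j < n -> diag_split L i j /\ antidiag_split L i j.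
Definition off_inner_rows m (L : seq vertex) :=
  forall r, 1 < r < m -> has (fun x : vertex => x.1 != r) L.
Definition off_inner_cols n (L : seq vertex) :=
  forall c, 1 < c < n -> has (fun x : vertex => x.2 != c) L.

Lemma landmark_splits_squares m n L : landmark m n L -> splits_squares m n L.
Proof.
case=> _ hsep i j hi hj; split.
- have [|||x xL hx] := hsep (i, j) (i.+1, j.+1); rewrite /inV /=; try by [lia | case; lia].
  apply/hasP; exists x => //; move: hx; rewrite /separates /gdist /adiff /=; lia.
- have [|||x xL hx] := hsep (i, j.+1) (i.+1, j); rewrite /inV /=; try by [lia | case; lia].
  apply/hasP; exists x => //; move: hx; rewrite /separates /gdist /adiff /=; lia.
Qed.

Lemma landmark_off_inner_cols m n L : 1 <= m -> landmark m n L -> off_inner_cols n L.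
Proof.
move=> hm [_ hsep] c hc.
have [|||x xL hx] := hsep (1, c.-1) (1, c.+1); rewrite /inV /=; try by [lia | case; lia].
apply/hasP; exists x => //; move: hx; rewrite /separates /gdist /adiff /=; lia.
Qed.

Section Sufficiency.
Variables (m n : nat) (L : seq vertex).
Hypotheses (hm : 2 <= m) (hn : 2 <= n) (hsq : splits_squares m n L)
  (hrow : off_inner_rows m L) (hcol : off_inner_cols n L).

Local Notation separated u v := (exists2 x, x \in L & separates x u v).

Lemma splits_diag i j : 0 < i < m -> 0 < j < n -> diag_split L i j.
Proof. by move=> hi hj; case: (hsq hi hj). Qed.
Lemma splits_antidiag i j : 0 < i < m -> 0 < j < n -> antidiag_split L i j.
Proof. by move=> hi hj; case: (hsq hi hj). Qed.

(* If the midpoint is not inner, then b + b' is odd and every vertex separates. *)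
Lemma separated_same_row a b b' : 1 <= b <= n -> 1 <= b' <= n -> b != b' ->
  separated (a, b) (a, b').
Proof.
move=> hb hb' hbb.
case: (boolP (1 < (b + b') %/ 2 < n)) => hh.
  have/hasP[x xL hx] := hcol hh.
  by exists x => //; move: hx; rewrite /separates /gdist /adiff /=; lia.
have/hasP[x xL _] := splits_diag (ltac:(lia) : 0 < 1 < m) (ltac:(lia) : 0 < 1 < n).
by exists x => //; rewrite /separates /gdist /adiff /=; lia.
Qed.

Lemma separated_same_col a a' b : 1 <= a <= m -> 1 <= a' <= m -> a != a' ->
  separated (a, b) (a', b).
Proof.
move=> ha ha' haa.
case: (boolP (1 < (a + a') %/ 2 < m)) => hh.
  have/hasP[x xL hx] := hrow hh.
  by exists x => //; move: hx; rewrite /separates /gdist /adiff /=; lia.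
have/hasP[x xL _] := splits_diag (ltac:(lia) : 0 < 1 < m) (ltac:(lia) : 0 < 1 < n).
by exists x => //; rewrite /separates /gdist /adiff /=; lia.
Qed.

(* Here and below, the bisector of u and v crosses row a (column b when the
   row gap is the larger one) at (a, h) (resp. (h, b)), a corner of the chosen
   square; each vertex of the quadrants splitting it is strictly closer to u
   or to v. *)
Lemma separated_increasing a b a' b' : 1 <= a -> a' <= m -> 1 <= b -> b' <= n ->
  a < a' -> b < b' -> separated (a, b) (a', b').
Proof.
move=> ha ha' hb hb' haa hbb.
case: (leqP (a' - a) (b' - b)) => hpq.
- set h := (b + b' + (a' - a)) %/ 2.
  have/hasP[x xL hx] : diag_split L a h.-1 by apply: splits_diag; lia.
  by exists x => //; move: hx; rewrite /separates /gdist /adiff /=; lia.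
- set h := (a + a' + (b' - b)) %/ 2.
  have/hasP[x xL hx] : diag_split L h.-1 b by apply: splits_diag; lia.
  by exists x => //; move: hx; rewrite /separates /gdist /adiff /=; lia.
Qed.

Lemma separated_decreasing a b a' b' : 1 <= a -> a' <= m -> 1 <= b' -> b <= n ->
  a < a' -> b' < b -> separated (a, b) (a', b').
Proof.
move=> ha ha' hb' hb haa hbb.
case: (leqP (a' - a) (b - b')) => hpq.
- set h := (b + b' - (a' - a)) %/ 2.
  have/hasP[x xL hx] : antidiag_split L a h by apply: splits_antidiag; lia.
  by exists x => //; move: hx; rewrite /separates /gdist /adiff /=; lia.
- set h := (a + a' - (b - b')) %/ 2.
  have/hasP[x xL hx] : antidiag_split L h b' by apply: splits_antidiag; lia.
  by exists x => //; move: hx; rewrite /separates /gdist /adiff /=; lia.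
Qed.

Lemma landmark_of_splits : all (inV m n) L -> landmark m n L.
Proof.
split=> // u v; wlog le_uv : u v / u.1 <= v.1.
  move=> W hu hv huv; case: (leqP u.1 v.1) => h; first exact: W.
  have [||||x xL hx] := W v u; try by [|lia|move/esym].
  by exists x; rewrite // /separates eq_sym.
case: u le_uv => a b; case: v => a' b' /= le_aa'.
rewrite /inV /= => /andP[/andP[ha ha'] /andP[hb hb']] /andP[/andP[hc hc'] /andP[hd hd']].
case: (ltngtP a a') le_aa' => // [hlt|<-] _ huv.
- case: (ltngtP b b') => [hbb|hbb|<-].
  + exact: separated_increasing.
  + exact: separated_decreasing.
  + by apply: separated_same_col => //; lia.
- apply: separated_same_row; [lia | lia | by apply/eqP => e; apply: huv; rewrite e].
Qed.
End Sufficiency.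

Lemma odd_gt1 i : odd i -> 1 < i -> 2 < i.
Proof. by case: i => [|[|[|i]]]. Qed.

Section CorrespondingSequence.
Variables (m n k : nat) (q t : nat -> vertex).
Hypotheses (hz : zigzag m n k q) (hcr : corresponds m n k q t).

Lemma zigzag_len : 2 <= k.
Proof. by case: hz. Qed.

Lemma zigzag_step i : 1 < i <= 2 * k ->
  if odd i then (q i).1 = (q i.-1).1 /\ (q i.-1).2 < (q i).2
  else (q i).2 = (q i.-1).2 /\ (q i.-1).1 < (q i).1.
Proof.
case: hz => _ _ _ heven hodd hi; case: ifP => oi; last by apply: heven; rewrite ?oi //; lia.
by apply: hodd => //; have := odd_gt1 oi; lia.
Qed.

Lemma corresponds_step i : 0 < i <= 2 * k ->
  if odd i then (t i).2 = (q i).2 /\ (t i).1 <= (q i).1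
  else (t i).1 = (q i).1 /\ (t i).2 <= (q i).2.
Proof.
case: hcr => _ t1 heven hodd _ hi; case: ifP => oi; last by apply: heven; rewrite ?oi //; lia.
case: (ltnP 1 i) => hi1; first by apply: hodd => //; have := odd_gt1 oi hi1; lia.
have -> : i = 1 by lia.
by rewrite t1.
Qed.

Lemma zigzag_mono i j : 0 < i <= j -> j <= 2 * k ->
  (q i).1 <= (q j).1 /\ (q i).2 <= (q j).2.
Proof.
elim: j => [|j IH] hij hj; first lia.
case: (eqVneq i j.+1) => [->|hne]; first lia.
have [] := IH (ltac:(lia)) (ltac:(lia)).
by have := @zigzag_step j.+1 (ltac:(lia)); case: ifP => _ /=; lia.
Qed.

Lemma mem_tseq i : 0 < i <= 2 * k -> t i \in tseq k t.
Proof. by move=> hi; apply: map_f; rewrite mem_iota; lia. Qed.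

(* t_j shares its row (j even) or column (j odd) with q_j; that coordinate of
   q_j strictly exceeds the one of q_(j-1), which bounds the one of t_i, i < j. *)
Lemma tseq_uniq : uniq (tseq k t).
Proof.
rewrite /tseq map_inj_in_uniq ?iota_uniq // => i j; rewrite !mem_iota => hi hj.
wlog lt_ij : i j hi hj / i < j.
  move=> W e; case: (ltngtP i j) => // [lt|lt]; first exact: W.
  by apply/esym/W.
move=> e; have := @corresponds_step i (ltac:(lia)); have := @corresponds_step j (ltac:(lia)).
have [] := @zigzag_mono i j.-1 (ltac:(lia)) (ltac:(lia)).
have := @zigzag_step j (ltac:(lia)); rewrite e.
by case: (odd i); case: (odd j) => /=; lia.
Qed.

Lemma corresponds_first_row : (t 1).1 = 1.
Proof. by case: hcr => _ -> _ _ _; case: hz => _ _ []. Qed.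

Lemma corresponds_last_row : (t (2 * k)).1 = m.
Proof.
have := @corresponds_step (2 * k) (ltac:(have := zigzag_len; lia)).
by rewrite oddM /= => -[-> _]; case: hz => _ _ [].
Qed.

Lemma corresponds_diag_split i j : 0 < i < m -> 0 < j < n -> diag_split (tseq k t) i j.
Proof.
move=> hi hj; have hk := zigzag_len; have r1 := corresponds_first_row.
have rm := corresponds_last_row; have [_ _ _ _ c1] := hcr.
case: (leqP (t 1).2 j) => h.
  by apply/hasP; exists (t 1); [apply: mem_tseq; lia | lia].
by apply/hasP; exists (t (2 * k)); [apply: mem_tseq; lia | lia].
Qed.

(* Follow the staircase to the odd index l with (q l).2 <= j < (q l.+2).2:
   one of t_(l+1), t_(l+2) then lies in the required quadrants. *)
Lemma corresponds_antidiag_split i j : 0 < i < m -> 0 < j < n ->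
  antidiag_split (tseq k t) i j.
Proof.
move=> hi hj; have hk := zigzag_len; have r1 := corresponds_first_row.
have := @corresponds_step 1 (ltac:(lia)) => /= -[c1 _].
case: (ltnP j (t 1).2) => hj1.
  by apply/hasP; exists (t 1); [apply: mem_tseq; lia | lia].
suff: forall d l, 2 * k - l <= d -> odd l -> 0 < l < 2 * k -> (q l).2 <= j ->
    antidiag_split (tseq k t) i j.
  by move=> /(_ (2 * k) 1); apply => //; lia.
elim=> [|d IH] l hd ol hl hql; first lia.
have := @zigzag_step l.+1 (ltac:(lia)); have := @corresponds_step l.+1 (ltac:(lia)).
rewrite /= ol /= => -[r1' c1'] [c1'' r1''].
case: (eqVneq l.+1 (2 * k)) => [el|nel].
  have [_ _ [_ qm] _ _] := hz; rewrite -el in qm.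
  by apply/hasP; exists (t l.+1); [apply: mem_tseq; lia | lia].
have := @zigzag_step l.+2 (ltac:(lia)); have := @corresponds_step l.+2 (ltac:(lia)).
rewrite /= ol /= => -[c2 r2] [r2' c2'].
case: (leqP (q l.+2).2 j) => hq2.
  by apply: (IH l.+2) => //; [lia | rewrite /= ol | lia].
case: (leqP (t l.+2).1 i) => ht.
  by apply/hasP; exists (t l.+2); [apply: mem_tseq; lia | lia].
by apply/hasP; exists (t l.+1); [apply: mem_tseq; lia | lia].
Qed.

Lemma corresponds_landmark : 2 <= m -> 2 <= n -> landmark m n (tseq k t).
Proof.
move=> hm hn; have hk := zigzag_len; have r1 := corresponds_first_row.
have rm := corresponds_last_row; have [hin _ _ _ c1] := hcr.
apply: landmark_of_splits => //.
- by move=> i j hi hj; split; [apply: corresponds_diag_split | apply: corresponds_antidiag_split].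
- by move=> r hr; apply/hasP; exists (t 1); [apply: mem_tseq; lia | lia].
- move=> c hc; case: (eqVneq (t 1).2 c) => e.
    by apply/hasP; exists (t (2 * k)); [apply: mem_tseq; lia | lia].
  by apply/hasP; exists (t 1); [apply: mem_tseq; lia | lia].
- by apply/allP=> x /mapP[i]; rewrite mem_iota => hi ->; apply: hin; lia.
Qed.
End CorrespondingSequence.

Section ArgMax.
Variables (T : eqType) (x0 : T) (P : pred T) (F : T -> nat) (s : seq T).

Definition argmax_seq := nth x0 s (find (fun x => P x && (F x == \max_(y <- s | P y) F y)) s).

Lemma argmax_seqP : has P s ->
  [/\ argmax_seq \in s, P argmax_seq & F argmax_seq = \max_(y <- s | P y) F y].
Proof.
set M := \max_(y <- s | P y) F y => hP.
have hQ : has (fun x => P x && (F x == M)) s.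
  apply/hasPn => hQ; have lt_M : forall x, x \in s -> P x -> F x <= M.-1.
    by move=> x xs Px; have := hQ x xs; have := @leq_bigmax_seq _ _ _ F x xs Px; rewrite Px /=; lia.
  have/hasP[x xs Px] := hP; have := lt_M x xs Px; have := hQ x xs; rewrite Px /=.
  have : M <= M.-1 by apply/bigmax_leqP_seq.
  lia.
have /andP[hPa /eqP hFa] := nth_find x0 hQ.
by split=> //; rewrite /argmax_seq mem_nth // -has_find.
Qed.
End ArgMax.

Lemma pos_double_cases i : 0 < i -> (exists j, i = j.*2.+1) \/ (exists j, i = j.*2.+2).
Proof.
move=> hi; have := odd_double_half i; case: (odd i) => /= e.
  by left; exists i./2; move: e; rewrite -!mul2n; lia.
by right; exists (i./2).-1; move: e; rewrite -!mul2n; lia.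
Qed.

Section Greedy.
Variables (m n : nat) (L : seq vertex) (x0 : vertex).
Hypotheses (hm : 2 <= m) (hL : all (inV m n) L)
  (hanti : forall i j, 0 < i < m -> 0 < j < n -> antidiag_split L i j)
  (hx0 : x0 \in L) (hx01 : x0.1 = 1)
  (hbot : exists2 z : vertex, z \in L & z.1 = m)
  (hleft : forall z : vertex, z \in L -> z.1 = m -> x0.2 < z.2)
  (hlow : has (fun y : vertex => (y.2 <= x0.2) && (1 < y.1)) L).

Definition maxrow C := \max_(x <- L | x.2 <= C) x.1.
Definition maxcol R := \max_(x <- L | x.1 <= R) x.2.
Definition argrow C : vertex := argmax_seq x0 (fun x : vertex => x.2 <= C) (fun x => x.1) L.
Definition argcol R : vertex := argmax_seq x0 (fun x : vertex => x.1 <= R) (fun x => x.2) L.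

Lemma le_maxrow (x : vertex) C : x \in L -> x.2 <= C -> x.1 <= maxrow C.
Proof. exact: leq_bigmax_seq. Qed.
Lemma le_maxcol (x : vertex) R : x \in L -> x.1 <= R -> x.2 <= maxcol R.
Proof. exact: leq_bigmax_seq. Qed.
Lemma maxrow_le C : maxrow C <= m.
Proof. by apply/bigmax_leqP_seq => x /(mem_inV hL) [/andP[_ h] _] _. Qed.
Lemma maxcol_le R : maxcol R <= n.
Proof. by apply/bigmax_leqP_seq => x /(mem_inV hL) [_ /andP[_ h]] _. Qed.

Lemma argrowP C : x0.2 <= C ->
  [/\ argrow C \in L, (argrow C).2 <= C & (argrow C).1 = maxrow C].
Proof. by move=> hC; apply: argmax_seqP; apply/hasP; exists x0. Qed.
Lemma argcolP R : 1 <= R ->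
  [/\ argcol R \in L, (argcol R).1 <= R & (argcol R).2 = maxcol R].
Proof. by move=> hR; apply: argmax_seqP; apply/hasP; exists x0 => //; rewrite hx01. Qed.

(* C_j := greedy_col j and R_j := greedy_row j, the lowest row of L within
   columns <= C_j; C_(j+1) is the rightmost column of L within rows <= R_j. *)
Fixpoint greedy_col j := if j is j'.+1 then maxcol (maxrow (greedy_col j')) else x0.2.
Local Notation greedy_row j := (maxrow (greedy_col j)).

Lemma greedy_col_ge j : x0.2 <= greedy_col j.
Proof.
elim: j => [|j IH] //=; apply: le_maxcol => //; rewrite hx01.
by have := le_maxrow hx0 IH; rewrite hx01.
Qed.

Lemma greedy_row_ge j : 1 <= greedy_row j.
Proof. by have := le_maxrow hx0 (greedy_col_ge j); rewrite hx01. Qed.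

Lemma greedy_col_le j : greedy_col j <= n.
Proof. by case: j => [|j] /=; [have := mem_inV hL hx0; lia | apply: maxcol_le]. Qed.

Lemma col_lt_of_maxrow C : maxrow C < m -> C < n.
Proof.
move=> hC; have [z zL zm] := hbot; have [_ hz] := mem_inV hL zL.
by case: (ltnP C n) => // hn; have := @le_maxrow z C zL (ltac:(lia)); lia.
Qed.

(* Maximality of R_j (resp. C_(j+1)) excludes one of the quadrants splitting
   the anti-diagonal of the square at (R_j, C_j) (resp. (R_j, C_(j+1))); a
   vertex in the other one forces C_j < C_(j+1) (resp. R_j < R_(j+1)). *)
Lemma greedy_step j : greedy_row j < m ->
  greedy_col j < greedy_col j.+1 /\ greedy_row j < greedy_row j.+1.
Proof.
move=> hR; have [_ hx] := mem_inV hL hx0.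
have c0 := greedy_col_ge j; have r0 := greedy_row_ge j; have cn := col_lt_of_maxrow hR.
have hcol : greedy_col j < greedy_col j.+1.
  have/hasP[x xL /orP[]/andP[h1 h2]] :=
    @hanti (greedy_row j) (greedy_col j) (ltac:(lia)) (ltac:(lia)).
    by have := le_maxcol xL h1; rewrite /=; lia.
  by have := le_maxrow xL h2; lia.
split=> //; case: (ltnP (greedy_row j.+1) m) => [hR'|]; last lia.
have cn' := col_lt_of_maxrow hR'.
have/hasP[x xL /orP[]/andP[h1 h2]] :=
  @hanti (greedy_row j) (greedy_col j.+1) (ltac:(lia)) (ltac:(lia)).
  by have := le_maxcol xL h1; rewrite /= in h2 *; lia.
by have := le_maxrow xL h2; lia.
Qed.

Lemma greedy_row0 : 1 < greedy_row 0 < m.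
Proof.
have/hasP[y yL /andP[h1 h2]] := hlow; have := @le_maxrow y (greedy_col 0) yL h1.
suff : greedy_row 0 <= m.-1 by lia.
apply/bigmax_leqP_seq => x xL hx; have [/andP[_ hxm] _] := mem_inV hL xL.
by case: (eqVneq x.1 m) => [/(hleft xL)|]; rewrite /= in hx *; lia.
Qed.

Lemma greedy_reaches_bottom : exists j, greedy_row j == m.
Proof.
suff: forall j, (exists2 j', j' <= j & greedy_row j' = m) \/ j.+2 <= greedy_row j.
  case/(_ m) => [[j' _ e]|h]; first by exists j'; rewrite e.
  by have := maxrow_le (greedy_col m); lia.
elim=> [|j [[j' hj' e]|IH]].
- by right; have := greedy_row0; lia.
- by left; exists j' => //; lia.
- case: (ltnP (greedy_row j) m) => h; first by right; have := greedy_step h; lia.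
  by left; exists j => //; have := maxrow_le (greedy_col j); lia.
Qed.

Lemma greedy_stops : exists K, [/\ 0 < K, greedy_row K = m & forall j, j < K -> greedy_row j < m].
Proof.
case: (ex_minnP greedy_reaches_bottom) => K /eqP hK hmin; exists K; split=> //.
  by case: (posnP K) hK => [->|//]; have := greedy_row0; lia.
move=> j hj; have := maxrow_le (greedy_col j); case: (ltngtP (greedy_row j) m) => // e _.
by have := hmin j (introT eqP e); lia.
Qed.

(* q_(2j+1) = (R_(j-1), C_j) and q_(2j+2) = (R_j, C_j), with R_(-1) = 1;
   t_(2j+1) is a rightmost vertex in rows <= R_(j-1), t_(2j+2) a lowest one in
   columns <= C_j. *)
Definition greedy_q i : vertex :=
  if odd i then ((if i./2 is j.+1 then greedy_row j else 1), greedy_col i./2)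
  else (greedy_row (i./2).-1, greedy_col (i./2).-1).
Definition greedy_t i : vertex :=
  if odd i then (if i./2 is j.+1 then argcol (greedy_row j) else x0)
  else argrow (greedy_col (i./2).-1).

Lemma greedy_q_odd j : greedy_q j.*2.+1 = ((if j is j'.+1 then greedy_row j' else 1), greedy_col j).
Proof. by rewrite /greedy_q /= odd_double uphalf_double. Qed.
Lemma greedy_q_even j : greedy_q j.*2.+2 = (greedy_row j, greedy_col j).
Proof. by rewrite /greedy_q /= odd_double doubleK. Qed.
Lemma greedy_t_odd j : greedy_t j.*2.+1 = (if j is j'.+1 then argcol (greedy_row j') else x0).
Proof. by rewrite /greedy_t /= odd_double uphalf_double. Qed.
Lemma greedy_t_even j : greedy_t j.*2.+2 = argrow (greedy_col j).
Proof. by rewrite /greedy_t /= odd_double doubleK. Qed.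

Section Stop.
Variable K : nat.
Hypotheses (hK : 0 < K) (hRK : greedy_row K = m) (hRlt : forall j, j < K -> greedy_row j < m).

Lemma greedy_zigzag : zigzag m n K.+1 greedy_q.
Proof.
have e2k : 2 * K.+1 = K.*2.+2 by rewrite mul2n doubleS.
have rowsP j : 1 <= greedy_row j <= m by rewrite greedy_row_ge maxrow_le.
have colsP j : 1 <= greedy_col j <= n.
  by have [_ /andP[hx _]] := mem_inV hL hx0; rewrite greedy_col_le (leq_trans hx (greedy_col_ge j)).
split; first lia.
- move=> i hi; have [[j ei]|[j ei]] := @pos_double_cases i (ltac:(lia)); subst i.
    by rewrite greedy_q_odd /inV colsP andbT; case: j {hi} => [|j] //=; lia.
  by rewrite greedy_q_even; apply/andP; split; [exact: rowsP | exact: colsP].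
- by rewrite e2k greedy_q_even hRK.
- move=> i hi; have [[j ei]|[j ei]] := @pos_double_cases i (ltac:(lia)); subst i.
    by rewrite /= odd_double.
  move=> _; rewrite /= greedy_q_even greedy_q_odd /=; split=> //.
  case: j hi => [|j] hi; first by have := greedy_row0; lia.
  by have := greedy_step (@hRlt j (ltac:(lia))); lia.
- move=> i hi; have [[j ei]|[j ei]] := @pos_double_cases i (ltac:(lia)); subst i; last first.
    by rewrite /= odd_double.
  move=> _; case: j hi => [|j] hi; first lia.
  rewrite (_ : (j.+1.*2.+1).-1 = j.*2.+2); last by rewrite doubleS.
  rewrite greedy_q_odd greedy_q_even /=; split=> //.
  by have := greedy_step (@hRlt j (ltac:(lia))); rewrite /=; lia.
Qed.

Lemma greedy_t_mem i : 0 < i -> greedy_t i \in L.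
Proof.
move=> /pos_double_cases [[j ->]|[j ->]].
  by rewrite greedy_t_odd; case: j => [|j] //; case: (argcolP (greedy_row_ge j)).
by rewrite greedy_t_even; case: (argrowP (greedy_col_ge j)).
Qed.

Lemma greedy_corresponds : corresponds m n K.+1 greedy_q greedy_t.
Proof.
have e2k : 2 * K.+1 = K.*2.+2 by rewrite mul2n doubleS.
split.
- by move=> i hi; apply: (allP hL); apply: greedy_t_mem; lia.
- by rewrite /greedy_t /greedy_q /=; move: hx01; case: x0 => a b /= ->.
- move=> i hi; have [[j ei]|[j ei]] := @pos_double_cases i (ltac:(lia)); subst i.
    by rewrite /= odd_double.
  move=> _; rewrite greedy_t_even greedy_q_even /=.
  by case: (argrowP (greedy_col_ge j)) => _ h1 h2; lia.
- move=> i hi; have [[j ei]|[j ei]] := @pos_double_cases i (ltac:(lia)); subst i; last first.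
    by rewrite /= odd_double.
  move=> _; case: j hi => [|j] hi; first lia.
  by rewrite greedy_t_odd greedy_q_odd /=; case: (argcolP (greedy_row_ge j)) => _ h1 h2; lia.
- rewrite e2k greedy_t_even (_ : 1 = 0.*2.+1) // greedy_t_odd.
  have [h0 h1 h2] := argrowP (greedy_col_ge K).
  by apply: hleft => //; rewrite h2 hRK.
Qed.

Lemma greedy_tseq_sub : {subset tseq K.+1 greedy_t <= L}.
Proof. by move=> w /mapP[i]; rewrite mem_iota => hi ->; apply: greedy_t_mem; lia. Qed.
End Stop.
End Greedy.

Lemma landmark_map m n m' n' (f g : vertex -> vertex) L :
  (forall v, inV m n v -> inV m' n' (f v)) ->
  (forall w, inV m' n' w -> inV m n (g w)) ->
  (forall w, inV m' n' w -> f (g w) = w) ->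
  (forall u v, inV m n u -> inV m n v -> gdist (f u) (f v) = gdist u v) ->
  landmark m n L -> landmark m' n' (map f L).
Proof.
move=> hf hg hfg hiso [hL hsep]; split.
  by apply/allP => _ /mapP[x xL ->]; apply/hf/(allP hL).
move=> u v hu hv huv; have [|||x xL hx] := hsep (g u) (g v); try exact: hg.
  by move=> e; apply: huv; rewrite -(hfg u hu) -(hfg v hv) e.
exists (f x); first exact: map_f.
by rewrite /separates -(hfg u hu) -(hfg v hv) !hiso ?hg //; apply: (allP hL).
Qed.

Lemma map_uniq_cancel m n (f g : vertex -> vertex) L :
  (forall v, inV m n v -> g (f v) = v) -> all (inV m n) L -> uniq L -> uniq (map f L).
Proof.
move=> hgf /allP hL hu; rewrite map_inj_in_uniq // => x y xL yL e.
by rewrite -(hgf x (hL x xL)) e hgf // hL.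
Qed.

Lemma minimal_landmark_sub m n L T :
  minimal_landmark m n L -> {subset T <= L} -> landmark m n T -> {subset L <= T}.
Proof.
case=> _ hmin hTL hT; apply/allP; apply: contraT => /allPn[x xL xT].
by case: (hmin T hTL) => // /(_ x xL); rewrite (negbTE xT).
Qed.

Section Symmetry.
Variables (m n : nat) (s : bool * bool * bool).
Local Notation m' := (symdims m n s).1.
Local Notation n' := (symdims m n s).2.

Lemma symv_in v : inV m n v -> inV m' n' (symv m n s v).
Proof. by case: s => [[[] []] []]; case: v => a b; rewrite /inV /symv /symdims /=; lia. Qed.
Lemma syminv_in w : inV m' n' w -> inV m n (syminv m n s w).
Proof. by case: s => [[[] []] []]; case: w => a b; rewrite /inV /syminv /symdims /=; lia. Qed.
Lemma syminvK v : inV m n v -> syminv m n s (symv m n s v) = v.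
Proof.
by case: s => [[[] []] []]; case: v => a b; rewrite /inV /symv /syminv /= => h; congr pair; lia.
Qed.
Lemma symvK w : inV m' n' w -> symv m n s (syminv m n s w) = w.
Proof.
case: s => [[[] []] []]; case: w => a b; rewrite /inV /symv /syminv /symdims /= => h.
all: by congr pair; lia.
Qed.
Lemma gdist_symv u v : inV m n u -> inV m n v -> gdist (symv m n s u) (symv m n s v) = gdist u v.
Proof.
case: s => [[[] []] []]; case: u => a b; case: v => c d.
all: by rewrite /inV /symv /gdist /adiff /=; lia.
Qed.
Lemma gdist_syminv u v : inV m' n' u -> inV m' n' v ->
  gdist (syminv m n s u) (syminv m n s v) = gdist u v.
Proof. by move=> hu hv; rewrite -gdist_symv ?symvK //; apply: syminv_in. Qed.

Lemma landmark_symv L : landmark m n L -> landmark m' n' (map (symv m n s) L).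
Proof.
by apply: landmark_map; [exact: symv_in | exact: syminv_in | exact: symvK | exact: gdist_symv].
Qed.
Lemma landmark_syminv L : landmark m' n' L -> landmark m n (map (syminv m n s) L).
Proof.
by apply: landmark_map; [exact: syminv_in | exact: symv_in | exact: syminvK | exact: gdist_syminv].
Qed.

Lemma minimal_landmark_symv L :
  minimal_landmark m n L -> minimal_landmark m' n' (map (symv m n s) L).
Proof.
move=> hmin; split; first exact/landmark_symv/hmin.1.
move=> T hT hnot /[dup] hlT /landmark_syminv hlT'; apply: hnot => _ /mapP[x xL ->].
have gT : {subset map (syminv m n s) T <= L}.
  by move=> _ /mapP[w /hT /mapP[v vL ->] ->]; rewrite syminvK //; apply: (allP hmin.1.1).
have /mapP[w wT ->] := minimal_landmark_sub hmin gT hlT' xL.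
by rewrite symvK //; apply: (allP hlT.1).
Qed.

Lemma uniq_symv L : all (inV m n) L -> uniq L -> uniq (map (symv m n s) L).
Proof. exact/map_uniq_cancel/syminvK. Qed.
Lemma uniq_syminv L : all (inV m' n') L -> uniq L -> uniq (map (syminv m n s) L).
Proof. exact/map_uniq_cancel/symvK. Qed.
End Symmetry.

Lemma splits_squares_sub m n (S S' : seq vertex) :
  {subset S <= S'} -> splits_squares m n S -> splits_squares m n S'.
Proof.
move=> hS; have sub P : has P S -> has P S'.
  by case/hasP=> x xS hx; apply/hasP; exists x => //; apply: hS.
by move=> hsq i j hi hj; have [] := hsq i j hi hj; split; apply: sub.
Qed.

Lemma splits_column_ends m n A : splits_squares m n [:: (1, A); (m, A)].
Proof. by move=> i j hi hj; rewrite /diag_split /antidiag_split /=; split; lia. Qed.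

Lemma splits_top_pair_bottom m n x y z : x <= z <= y ->
  splits_squares m n [:: (1, x); (1, y); (m, z)].
Proof. by move=> h i j hi hj; rewrite /diag_split /antidiag_split /=; split; lia. Qed.

Lemma off_inner_rows_top m a (S : seq vertex) : off_inner_rows m ((1, a) :: S).
Proof. by move=> r hr /=; apply/orP; left; lia. Qed.

Lemma off_inner_cols_pair n (S : seq vertex) u v :
  u \in S -> v \in S -> u.2 != v.2 -> off_inner_cols n S.
Proof.
move=> uS vS huv c _; apply/hasP; case: (eqVneq u.2 c) => [e|]; last by exists u.
by exists v; rewrite // -e eq_sym.
Qed.

Lemma off_inner_cols_border n a A (S : seq vertex) : ~~ (1 < A < n) ->
  off_inner_cols n ((a, A) :: S).
Proof. by move=> hA c hc /=; apply/orP; left; apply: contra hA => /eqP ->. Qed.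

Definition top_left m (L : seq vertex) (x : vertex) :=
  (x.1 == 1) && all (fun z : vertex => (z.1 == m) ==> (x.2 < z.2)) L.
Definition bottom_left m (L : seq vertex) (z : vertex) :=
  (z.1 == m) && all (fun x : vertex => (x.1 == 1) ==> (z.2 < x.2)) L.

Definition corresponding_set m n (L : seq vertex) :=
  exists k q t, [/\ zigzag m n k q, corresponds m n k q t & perm_eq (tseq k t) L].

Section MinimalLandmark.
Variables (m n : nat) (L : seq vertex).
Hypotheses (hm : 2 <= m) (hn : 2 <= n) (hmin : minimal_landmark m n L) (hu : uniq L)
  (hsize : 4 <= size L).

Let hL : all (inV m n) L := hmin.1.1.
Let hsq : splits_squares m n L := landmark_splits_squares hmin.1.

Lemma no_small_landmark_subset (S : seq vertex) : {subset S <= L} -> size S <= 3 ->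
  splits_squares m n S -> off_inner_rows m S -> off_inner_cols n S -> False.
Proof.
move=> hSL hS hsqS hrow hcol.
have hlS : landmark m n S.
  by apply: landmark_of_splits => //; apply/allP => x /hSL; apply: (allP hL).
by have := leq_trans hsize (leq_trans (uniq_leq_size hu (minimal_landmark_sub hmin hSL hlS)) hS).
Qed.

Lemma corresponding_of_greedy (x0 : vertex) : x0 \in L -> x0.1 = 1 ->
  (exists2 z : vertex, z \in L & z.1 = m) ->
  (forall z : vertex, z \in L -> z.1 = m -> x0.2 < z.2) ->
  has (fun y : vertex => (y.2 <= x0.2) && (1 < y.1)) L -> corresponding_set m n L.
Proof.
move=> hx0 hx01 hbot hleft hlow.
have hanti i j : 0 < i < m -> 0 < j < n -> antidiag_split L i j by move=> hi hj; case: (hsq hi hj).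
have [K [hK hRK hRlt]] : exists K, [/\ 0 < K, maxrow L (greedy_col L x0 K) = m &
    forall j, j < K -> maxrow L (greedy_col L x0 j) < m] by apply: (@greedy_stops m n).
have hz : zigzag m n K.+1 (greedy_q L x0) by apply: (@greedy_zigzag m n).
have hcr : corresponds m n K.+1 (greedy_q L x0) (greedy_t L x0) by apply: (@greedy_corresponds m n).
have hsub : {subset tseq K.+1 (greedy_t L x0) <= L} by apply: (@greedy_tseq_sub m n).
have hLT := minimal_landmark_sub hmin hsub (corresponds_landmark hz hcr hm hn).
exists K.+1, (greedy_q L x0), (greedy_t L x0); split=> //.
by apply: uniq_perm (tseq_uniq hz hcr) hu _ => x; apply/idP/idP => [/hsub|/hLT].
Qed.

Lemma rightmost_top_left_contra (x : vertex) : x \in L -> top_left m L x ->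
  (forall y, y \in L -> top_left m L y -> y.2 <= x.2) ->
  (exists2 z : vertex, z \in L & z.1 = m) ->
  ~~ has (fun y : vertex => (y.2 <= x.2) && (1 < y.1)) L -> False.
Proof.
case: x => a b xL /andP[/eqP /= ea /allP xleft] xmax [z0 z0L z0m] /hasPn hhigh; subst a.
have /= [_ /andP[hb _]] := mem_inV hL xL; have [_ /andP[_ hz0n]] := mem_inV hL z0L.
have z0b : b < z0.2 by have := xleft z0 z0L; rewrite z0m eqxx.
have [_ /hasP[[a' b'] yL hy]] := hsq (ltac:(lia) : 0 < 1 < m) (ltac:(lia) : 0 < b < n).
have := hhigh _ yL; have /= [/andP[ha' _] _] := mem_inV hL yL; rewrite /= in hy * => hnlow.
have ea' : a' = 1 by lia.
have hbb : b < b' by lia.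
subst a'; have /allPn[[c d] zL] : ~~ all (fun z : vertex => (z.1 == m) ==> (b' < z.2)) L.
  apply/negP => hall; have := xmax _ yL; rewrite /top_left eqxx hall /=; lia.
rewrite negb_imply => /andP[/eqP /= ec hd]; subst c.
have := xleft _ zL; rewrite /= eqxx /= => hbd.
apply: (@no_small_landmark_subset [:: (1, b); (1, b'); (m, d)]) => //.
- by move=> w; rewrite !inE => /or3P[] /eqP ->.
- by apply: splits_top_pair_bottom; lia.
- exact: off_inner_rows_top.
- by apply: (@off_inner_cols_pair _ _ (1, b) (m, d)); rewrite ?inE ?eqxx ?orbT //=; lia.
Qed.

Lemma corresponding_of_top_left : (exists2 z : vertex, z \in L & z.1 = m) ->
  has (top_left m L) L -> corresponding_set m n L.
Proof.
move=> hbot htl.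
have [xL hx hxmax] := @argmax_seqP _ (1, 1) (top_left m L) (fun x : vertex => x.2) L htl.
set x := argmax_seq _ _ _ _ in xL hx hxmax.
have hxmax' y : y \in L -> top_left m L y -> y.2 <= x.2.
  by move=> yL hy; rewrite hxmax; exact: leq_bigmax_seq.
case: (boolP (has (fun y : vertex => (y.2 <= x.2) && (1 < y.1)) L)) => hlow; last first.
  by case: (rightmost_top_left_contra xL hx hxmax' hbot hlow).
move: hx => /andP[/eqP hx1 /allP hleft].
by apply: (corresponding_of_greedy xL hx1 hbot) => // z zL zm; have := hleft z zL; rewrite zm eqxx.
Qed.

(* Without such vertices, the leftmost vertex (1, A) of the top row faces a
   vertex (m, A) of the bottom row, and these two with at most one more
   vertex of L already form a landmark set. *)
Lemma top_bottom_contra : has (fun x : vertex => x.1 == 1) L ->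
  ~~ has (top_left m L) L -> ~~ has (bottom_left m L) L -> False.
Proof.
move=> htop /hasPn ntl /hasPn nbl.
have ex1 : exists c, has (fun x : vertex => (x.1 == 1) && (x.2 == c)) L.
  by have/hasP[x xL x1] := htop; exists x.2; apply/hasP; exists x; rewrite ?x1 ?eqxx.
case: (ex_minnP ex1) => A /hasP[[a b] aL /andP[/eqP /= ea /eqP /= eb]] hminA; subst a b.
have minA b : (1, b) \in L -> A <= b.
  by move=> bL; apply: hminA; apply/hasP; exists (1, b); rewrite //= !eqxx.
have := ntl _ aL; rewrite /top_left eqxx /= => /allPn[[c d] zL].
rewrite negb_imply /= => /andP[/eqP ec hd]; subst c.
have := nbl _ zL; rewrite /bottom_left eqxx /= => /allPn[[c e] xL].
rewrite negb_imply /= => /andP[/eqP ec he]; subst c.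
have dA : d = A by have := minA _ xL; lia.
subst d; case: (boolP (has (fun y : vertex => y.2 != A) L)) => [/hasP[y yL hy]|/hasPn hcolA].
  apply: (@no_small_landmark_subset [:: (1, A); (m, A); y]) => //.
  - by move=> w; rewrite !inE => /or3P[] /eqP ->.
  - apply: (splits_squares_sub _ (@splits_column_ends m n A)) => w.
    by rewrite !inE => /orP[] ->; rewrite ?orbT.
  - exact: off_inner_rows_top.
  - by apply: (@off_inner_cols_pair _ _ (1, A) y); rewrite ?inE ?eqxx ?orbT // eq_sym.
case: (boolP (1 < A < n)) => hA.
  have/hasP[y yL hy] := landmark_off_inner_cols (ltnW hm) hmin.1 hA.
  by have := hcolA _ yL; rewrite hy.
apply: (@no_small_landmark_subset [:: (1, A); (m, A)]) => //.
- by move=> w; rewrite !inE => /orP[] /eqP ->.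
- exact: splits_column_ends.
- exact: off_inner_rows_top.
- exact: off_inner_cols_border.
Qed.
End MinimalLandmark.

(* The vertical flip turns a bottom-left vertex into a top-left one. *)
Lemma corresponding_of_top_bottom m n L : 2 <= m -> 2 <= n -> minimal_landmark m n L ->
  uniq L -> 4 <= size L -> has (fun x : vertex => x.1 == 1) L ->
  has (fun x : vertex => x.1 == m) L ->
  exists b, corresponding_set m n (map (symv m n (b, false, false)) L).
Proof.
move=> hm hn hmin hu hs htop /hasP[z0 z0L /eqP z0m]; have hL := hmin.1.1.
case: (boolP (has (top_left m L) L)) => htl.
  exists false; rewrite (@eq_map _ _ _ id) ?map_id; last by case.
  by apply: corresponding_of_top_left => //; exists z0.
case: (boolP (has (bottom_left m L) L)) => hbl; last first.
  by case: (top_bottom_contra hm hn hmin hu hs htop htl hbl).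
exists true; set f := symv m n (true, false, false).
have hmin' : minimal_landmark m n (map f L) := minimal_landmark_symv _ hmin.
have hu' : uniq (map f L) := uniq_symv _ hL hu.
apply: corresponding_of_top_left => //; first by rewrite size_map.
  have/hasP[[a b] xL /eqP /= e] := htop; subst a.
  by exists (f (1, b)); [exact: map_f | rewrite /= subSS subn0].
have/hasP[[a b] zL /andP[/eqP /= e /allP hB]] := hbl; subst a.
apply/hasP; exists (f (m, b)); first exact: map_f.
rewrite /top_left /= subSnn eqxx /=; apply/allP => _ /mapP[[c d] xL ->] /=.
apply/implyP => /eqP ec; have /= [/andP[hc hcm] _] := mem_inV hL xL.
have c1 : c = 1 by lia.
by have := hB _ xL; rewrite /= c1 eqxx.
Qed.

Lemma rows_or_cols_occupied m n L : 2 <= m -> 2 <= n -> landmark m n L ->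
  has (fun x : vertex => x.1 == 1) L && has (fun x : vertex => x.1 == m) L
  || has (fun x : vertex => x.2 == 1) L && has (fun x : vertex => x.2 == n) L.
Proof.
move=> hm hn hl; have hsq := landmark_splits_squares hl.
have corner (P Q : pred vertex) (x : vertex) : x \in L -> P x || Q x -> has P L || has Q L.
  by move=> xL /orP[] hx; apply/orP; [left | right]; apply/hasP; exists x.
have inL (x : vertex) : x \in L -> 1 <= x.1 <= m /\ 1 <= x.2 <= n by apply: mem_inV hl.1.
have [_ /hasP[x xL hx]] := hsq 1 1 (ltac:(lia)) (ltac:(lia)).
have r1c1 : has (fun x : vertex => x.1 == 1) L || has (fun x : vertex => x.2 == 1) L.
  by apply: (corner _ _ x xL) => /=; have := inL x xL; lia.
have [/hasP[y yL hy] _] := hsq 1 n.-1 (ltac:(lia)) (ltac:(lia)).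
have r1cn : has (fun x : vertex => x.1 == 1) L || has (fun x : vertex => x.2 == n) L.
  by apply: (corner _ _ y yL) => /=; have := inL y yL; lia.
have [/hasP[z zL hz] _] := hsq m.-1 1 (ltac:(lia)) (ltac:(lia)).
have rmc1 : has (fun x : vertex => x.1 == m) L || has (fun x : vertex => x.2 == 1) L.
  by apply: (corner _ _ z zL) => /=; have := inL z zL; lia.
have [_ /hasP[w wL hw]] := hsq m.-1 n.-1 (ltac:(lia)) (ltac:(lia)).
have rmcn : has (fun x : vertex => x.1 == m) L || has (fun x : vertex => x.2 == n) L.
  by apply: (corner _ _ w wL) => /=; have := inL w wL; lia.
by move: r1c1 r1cn rmc1 rmcn; do 4!case: has.
Qed.

Lemma minimal_landmark_corresponding m n L : 2 <= m -> 2 <= n -> minimal_landmark m n L ->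
  uniq L -> 4 <= size L ->
  exists s, corresponding_set (symdims m n s).1 (symdims m n s).2 (map (symv m n s) L).
Proof.
move=> hm hn hmin hu hs; have hL := hmin.1.1.
case/orP: (rows_or_cols_occupied hm hn hmin.1) => /andP[h1 h2].
  by have [b hb] := corresponding_of_top_bottom hm hn hmin hu hs h1 h2; exists (b, false, false).
set f := symv m n (false, false, true).
have [|||||b] := @corresponding_of_top_bottom n m (map f L) hn hm.
- exact: (minimal_landmark_symv _ hmin).
- exact: uniq_symv.
- by rewrite size_map.
- by rewrite has_map; apply: sub_has h1 => -[].
- by rewrite has_map; apply: sub_has h2 => -[].
rewrite -map_comp (@eq_map _ _ _ (symv m n (false, b, true))); first by exists (false, b, true).
by case=> x y; case: b.
Qed.

Lemma landmark_eq_mem m n (L L' : seq vertex) : L =i L' -> landmark m n L -> landmark m n L'.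
Proof.
move=> e [/allP hL hsep]; split; first by apply/allP => x; rewrite -e; apply: hL.
by move=> u v hu hv huv; have [x xL hx] := hsep u v hu hv huv; exists x; rewrite // -e.
Qed.

Lemma minimal_landmark_undup m n L : minimal_landmark m n L -> minimal_landmark m n (undup L).
Proof.
case=> hl hmin; split; first by apply: landmark_eq_mem hl => x; rewrite mem_undup.
move=> L' hsub hnot; apply: hmin => [x /hsub|h]; first by rewrite mem_undup.
by apply: hnot => x; rewrite mem_undup => /h.
Qed.

Lemma seqcostE c k (t : nat -> vertex) : seqcost c k t = (\sum_(w <- tseq k t) c w)%R.
Proof. by rewrite /seqcost /tseq big_map /index_iota subSS subn0. Qed.

(* Every sequence corresponding to q is a landmark set of pairwise distinct
   vertices, so its cost is that of a landmark set. *)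
Lemma perfect_of_min_cost m n (c : vertex -> rat) s (U : seq vertex) k (q t : nat -> vertex) :
  2 <= m -> 2 <= n -> all (inV m n) U ->
  (forall L, landmark m n L -> (\sum_(a <- U) c a <= setcost c L)%R) ->
  zigzag (symdims m n s).1 (symdims m n s).2 k q ->
  corresponds (symdims m n s).1 (symdims m n s).2 k q t ->
  perm_eq (tseq k t) (map (symv m n s) U) ->
  perfect (symdims m n s).1 (symdims m n s).2 (fun w => c (syminv m n s w)) k q t.
Proof.
move=> hm hn hU hcost hz hcr hp; split=> // t' hcr'.
have [hm' hn'] : 2 <= (symdims m n s).1 /\ 2 <= (symdims m n s).2 by rewrite /symdims; case: s.2.
rewrite !seqcostE (perm_big _ hp) big_map (eq_big_seq c) => [|v vU]; last first.
  by rewrite /= syminvK //; apply: (allP hU).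
have hl' := corresponds_landmark hz hcr' hm' hn'.
have hu := uniq_syminv hl'.1 (tseq_uniq hz hcr').
by have := hcost _ (landmark_syminv hl'); rewrite /setcost (undup_id hu) big_map.
Qed.

Theorem mainTheorem1 (m n : nat) (c : vertex -> rat)
  (hm : 2 <= m) (hn : 2 <= n)
  (hc : forall v, inV m n v -> (0 <= c v)%R) :
  (forall (k : nat) (q t : nat -> vertex),
     zigzag m n k q -> corresponds m n k q t -> landmark m n (tseq k t)) /\
  (forall L : seq vertex,
     minimal_landmark m n L -> min_cost_landmark m n c L -> 4 <= size (undup L) ->
     exists s : bool * bool * bool,
       let m' := (symdims m n s).1 in
       let n' := (symdims m n s).2 in
       let c' := fun w => c (syminv m n s w) in
       exists (k : nat) (q t : nat -> vertex),
         [/\ zigzag m' n' k q, perfect m' n' c' k q t &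
             perm_eq (tseq k t) (map (symv m n s) (undup L))]).
Proof.
split=> [k q t hz hcr | L hmin [_ hcost] hsize]; first exact: corresponds_landmark hz hcr hm hn.
have hmin' := minimal_landmark_undup hmin.
have [s [k [q [t [hz hcr hp]]]]] :=
  minimal_landmark_corresponding hm hn hmin' (undup_uniq L) hsize.
exists s, k, q, t; split=> //.
exact: perfect_of_min_cost hm hn hmin'.1.1 hcost hz hcr hp.
Qed.
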